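(* Let $X$ be a finite set, $\equiv$ an equivalence relation on $X$, and $k$ a natural number. Let $\mathcal{B}$ be the set of subsets $B \subseteq X$ with $|B| = k$ such that not all $k$ elements of $B$ are equivalent under $\equiv$. If $\mathcal{B} \neq \emptyset$, then $\mathcal{B}$ is the set of bases of a matroid on $X$. *)

From mathcomp Require Import all_boot.
Set Implicit Arguments. Unset Strict Implicit. Unset Printing Implicit Defensive.

Definition is_matroid_bases (T : finType) (bases : {set {set T}}) : Prop :=
  bases != set0 /\
  forall B1 B2, B1 \in bases -> B2 \in bases ->
    forall x, x \in B1 :\: B2 ->
      exists2 y, y \in B2 :\: B1 & (y |: (B1 :\ x)) \in bases.

Definition not_all_equiv_ksets (T : finType) (e : rel T) (k : nat) : {set {set T}} :=
  [set B : {set T} | (#|B| == k) && ~~ [forall x in B, forall y in B, e x y]].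

From mathcomp Require Import all_boot.

Set Implicit Arguments.
Unset Strict Implicit.
Unset Printing Implicit Defensive.

(* Exchange for B1, B2 and x in B1 \ B2: if B1 \ {x} is not contained in one
   class, any y in B2 \ B1 will do.  Otherwise B1 \ {x} lies in the class of
   some z (it is nonempty, since B1 meets two classes), and since B2 meets two
   classes it has an element y outside the class of z; such a y is neither x
   nor in B1 \ {x}, and {y} u (B1 \ {x}) meets the classes of z and y. *)

Lemma cardsU1D1 (T : finType) (B : {set T}) (x y : T) :
  x \in B -> y \notin B -> #|y |: (B :\ x)| = #|B|.
Proof.
move=> xB yB.
by rewrite cardsU1 !inE negb_and yB orbT (cardsD1 x B) xB.
Qed.

Section AllEquiv.

Variables (T : finType) (e : rel T).

Definition all_equiv (A : {set T}) := [forall x in A, forall y in A, e x y].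

Lemma all_equivP (A : {set T}) :
  reflect {in A &, forall a b, e a b} (all_equiv A).
Proof.
apply: (iffP forall_inP) => [allA a b aA bA | allA a aA].
  exact: (forall_inP (allA a aA)).
by apply/forall_inP => b bA; apply: allA.
Qed.

Lemma all_equivPn (A : {set T}) :
  reflect (exists2 a, a \in A & exists2 b, b \in A & ~~ e a b)
          (~~ all_equiv A).
Proof.
apply: (iffP forall_inPn) => [[a aA /forall_inPn [b bA nab]] | [a aA [b bA nab]]].
  by exists a => //; exists b.
by exists a => //; apply/forall_inPn; exists b.
Qed.

Lemma all_equivS (A B : {set T}) : A \subset B -> all_equiv B -> all_equiv A.
Proof.
move=> /subsetP sAB /all_equivP allB; apply/all_equivP => a b aA bA.
exact: allB (sAB a aA) (sAB b bA).
Qed.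

Lemma mem_not_all_equiv_ksets (k : nat) (B : {set T}) :
  (B \in not_all_equiv_ksets e k) = (#|B| == k) && ~~ all_equiv B.
Proof. by rewrite inE. Qed.

Hypothesis e_refl : reflexive e.

Lemma not_all_equiv_setD1_neq0 (A : {set T}) (x : T) :
  ~~ all_equiv A -> A :\ x != set0.
Proof.
move=> /all_equivPn [a aA [b bA nab]]; apply/set0Pn.
have [eax | ax] := eqVneq a x; last by exists a; rewrite !inE ax.
have [ebx | bx] := eqVneq b x; last by exists b; rewrite !inE bx.
by rewrite eax ebx e_refl in nab.
Qed.

Hypothesis e_ltrans : left_transitive e.

Lemma not_all_equiv_nonequiv (A : {set T}) (z : T) :
  ~~ all_equiv A -> exists2 y, y \in A & ~~ e z y.
Proof.
move=> /all_equivPn [a aA [b bA nab]].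
have [za | nza] := boolP (e z a); last by exists a.
by exists b => //; rewrite (e_ltrans za).
Qed.

Lemma not_all_equiv_exchange (B1 B2 : {set T}) (x : T) :
  #|B1| = #|B2| -> ~~ all_equiv B1 -> ~~ all_equiv B2 -> x \in B1 :\: B2 ->
  exists2 y, y \in B2 :\: B1 & ~~ all_equiv (y |: (B1 :\ x)).
Proof.
move=> eqB12 nB1 nB2; rewrite inE => /andP[xB2 xB1].
have [allB1x | nB1x] := boolP (all_equiv (B1 :\ x)); last first.
  have /set0Pn [y yB21] : B2 :\: B1 != set0.
    rewrite -card_gt0 cardsD setIC -eqB12 -cardsD card_gt0.
    by apply/set0Pn; exists x; rewrite inE xB2 xB1.
  exists y => //; apply: contra nB1x; apply: all_equivS; exact: subsetUr.
have /set0Pn [z zB1x] := not_all_equiv_setD1_neq0 x nB1.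
have [y yB2 nzy] := not_all_equiv_nonequiv z nB2.
have yB1 : y \notin B1.
  have [eyx | nyx] := eqVneq y x; first by rewrite -eyx yB2 in xB2.
  by apply: contra nzy => yB1; apply: (all_equivP _ allB1x); rewrite // !inE nyx.
exists y; first by rewrite inE yB1.
by apply/all_equivPn; exists z; rewrite ?setU1r //; exists y; rewrite ?setU11.
Qed.

End AllEquiv.

Theorem proposition3p16 (T : finType) (e : rel T) (k : nat) :
  equivalence_rel e ->
  not_all_equiv_ksets e k != set0 ->
  is_matroid_bases (not_all_equiv_ksets e k).
Proof.
move=> /equivalence_relP [e_refl e_ltrans] nonempty; split=> // B1 B2.
rewrite !mem_not_all_equiv_ksets => /andP[/eqP cardB1 nB1] /andP[/eqP cardB2 nB2].
move=> x xB12.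
have [y yB21 nBy] :=
  not_all_equiv_exchange e_refl e_ltrans (etrans cardB1 (esym cardB2)) nB1 nB2 xB12.
exists y => //; rewrite mem_not_all_equiv_ksets nBy andbT -cardB1.
move: xB12 yB21; rewrite !inE => /andP[_ xB1] /andP[yB1 _].
by rewrite cardsU1D1.
Qed.
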